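(* Let $X$ be a real vector space and let $\{x_i\}_{i\in I}$ be an algebraic (Hamel) basis of $X$. Then $0\notin cl_c(\{x_i\}_{i\in I})$.
   Context: For $A\subseteq X$, $cor(A):=\{x\in A:\ \forall x'\in X\ \exists \lambda'>0 \text{ with } x+\lambda x'\in A\ \forall\lambda\in[0,\lambda']\}$. The core convex topology $\tau_c$ on $X$ is the topology whose open sets are the unions of families of convex sets $B\subseteq X$ with $cor(B)=B$; $cl_c$ denotes closure in $\tau_c$. *)

From mathcomp Require Import all_boot all_order all_algebra.
From mathcomp Require Import all_classical all_reals.
From mathcomp Require Import convex.
Set Implicit Arguments. Unset Strict Implicit. Unset Printing Implicit Defensive.
Import Order.TTheory GRing.Theory Num.Theory.
Local Open Scope classical_set_scope.
Local Open Scope ring_scope.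

Section core_convex.
Variables (R : realType) (X : lmodType R).

Definition cor (A : set X) : set X :=
  [set x | A x /\ forall x' : X, exists2 l' : R, 0 < l' &
     forall l : R, 0 <= l -> l <= l' -> A (x + l *: x')].

Definition cconvex (A : set X) : Prop :=
  convex_set (A : set (convex_lmodType X)).

Definition core_open (U : set X) : Prop :=
  exists F : set (set X),
    (forall B, F B -> cconvex B /\ cor B = B) /\ U = \bigcup_(B in F) B.

Definition core_closed (C : set X) : Prop := core_open (~` C).

Definition cl_c (A : set X) : set X :=
  [set x | forall C, core_closed C -> A `<=` C -> C x].

Definition lin_indep (I : eqType) (b : I -> X) : Prop :=
  forall (s : seq I) (c : I -> R), uniq s ->
    \sum_(i <- s) c i *: b i = 0 -> forall i, i \in s -> c i = 0.

Definition spanning (I : eqType) (b : I -> X) : Prop :=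
  forall v : X, exists (s : seq I) (c : I -> R), v = \sum_(i <- s) c i *: b i.

Definition hamel_basis (I : eqType) (b : I -> X) : Prop :=
  lin_indep b /\ spanning b.

End core_convex.

(** The coordinate-sum functional [f] of the basis (the linear form with
    [f (b i) = 1] for all [i]) cuts out the half-space [f < 1].  It is convex
    and algebraically open, hence open for the core convex topology; it
    contains [0] but no basis vector, so its complement is a closed superset
    of the basis avoiding [0]. *)
From HB Require Import structures.
From mathcomp Require Import all_boot all_order all_algebra.
From mathcomp Require Import all_classical all_reals.
From mathcomp Require Import interval_inference convex lra.
Set Implicit Arguments. Unset Strict Implicit. Unset Printing Implicit Defensive.
Import Order.TTheory GRing.Theory Num.Theory.
Local Open Scope classical_set_scope.
Local Open Scope ring_scope.

Section linear_combination.
Variables (R : pzRingType) (I : eqType) (Y : lmodType R).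
Implicit Types (v : I -> Y) (L M : seq (I * R)).

(* Formal linear combinations are lists of (index, coefficient) pairs, so that
   they can be concatenated and rescaled without merging equal indices. *)
Definition lincomb v L : Y := \sum_(p <- L) p.2 *: v p.1.

Definition scale_coefs (a : R) L := [seq (p.1, a * p.2) | p <- L].

Lemma lincomb_cat v L M : lincomb v (L ++ M) = lincomb v L + lincomb v M.
Proof. exact: big_cat. Qed.

Lemma lincomb_scale v a L : lincomb v (scale_coefs a L) = a *: lincomb v L.
Proof.
rewrite /lincomb big_map scaler_sumr; apply: eq_bigr => p _.
by rewrite scalerA.
Qed.

Lemma lincomb_seq1 v i r : lincomb v [:: (i, r)] = r *: v i.
Proof. exact: big_seq1. Qed.

Lemma lincomb_undup v L :
  lincomb v L = \sum_(i <- undup (map fst L)) (\sum_(p <- L | p.1 == i) p.2) *: v i.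
Proof.
under [RHS]eq_bigr do rewrite scaler_suml big_mkcond.
rewrite [RHS]exchange_big; apply: eq_big_seq => p pL /=.
have p1L : p.1 \in undup (map fst L) by rewrite mem_undup map_f.
rewrite -big_mkcond (eq_bigl (pred1 p.1)) => [|i]; last by rewrite /= eq_sym.
by rewrite -big_filter (filter_pred1_uniq (undup_uniq _) p1L) big_seq1.
Qed.

End linear_combination.

Section hamel_basis.
Variables (R : realType) (X : lmodType R) (I : eqType) (b : I -> X).
Implicit Types (L M : seq (I * R)).

Lemma lin_indep_lincomb_eq0 (Y : lmodType R) (g : I -> Y) L :
  lin_indep b -> lincomb b L = 0 -> lincomb g L = 0.
Proof.
move=> b_indep /eqP; rewrite lincomb_undup => /eqP /b_indep coef0.
rewrite lincomb_undup big1_seq // => i /andP[_ iL].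
by rewrite coef0 ?undup_uniq // scale0r.
Qed.

Lemma lin_indep_lincomb_eq (Y : lmodType R) (g : I -> Y) L M :
  lin_indep b -> lincomb b L = lincomb b M -> lincomb g L = lincomb g M.
Proof.
move=> b_indep eqLM; apply/eqP; rewrite -subr_eq0 -scaleN1r -lincomb_scale.
rewrite -lincomb_cat; apply/eqP/(lin_indep_lincomb_eq0 _ b_indep).
by rewrite lincomb_cat lincomb_scale scaleN1r eqLM subrr.
Qed.

Lemma spanning_lincomb : spanning b -> forall x : X, exists L, x = lincomb b L.
Proof.
move=> b_span x; have [s [c ->]] := b_span x.
by exists [seq (i, c i) | i <- s]; rewrite /lincomb big_map.
Qed.

Lemma hamel_linear_extension (Y : lmodType R) (g : I -> Y) :
  hamel_basis b -> exists f : {linear X -> Y}, forall i, f (b i) = g i.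
Proof.
move=> [b_indep b_span].
pose rep x := sval (cid (spanning_lincomb b_span x)).
have repK x : x = lincomb b (rep x) by rewrite /rep; case: cid.
pose f x := lincomb g (rep x).
have f_lincomb L : f (lincomb b L) = lincomb g L.
  by apply: lin_indep_lincomb_eq; rewrite -?repK.
have f_linear : linear f.
  move=> a x y; rewrite [x in LHS]repK [y in LHS]repK.
  by rewrite -lincomb_scale -lincomb_cat f_lincomb lincomb_cat lincomb_scale.
pose F : {linear X -> Y} := HB.pack f (GRing.isLinear.Build _ _ _ _ f f_linear).
exists F => i /=.
by rewrite -[b i]scale1r -lincomb_seq1 f_lincomb lincomb_seq1 scale1r.
Qed.

End hamel_basis.

Section core_open_halfspace.
Variables (R : realType) (X : lmodType R) (f : {scalar X}) (c : R).

Lemma cor_halfspace : cor [set x | f x < c] = [set x | f x < c].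
Proof.
apply/seteqP; split=> [x [] //|x fx_lt]; split=> // y.
set d := f y; have dn1_gt0 : 0 < `|d| + 1 by rewrite ltr_wpDl.
pose e := (c - f x) / (`|d| + 1).
have e_gt0 : 0 < e by rewrite divr_gt0 ?subr_gt0.
have eE : e * (`|d| + 1) = c - f x by rewrite divfK ?gt_eqF.
have d_le : d <= `|d| by rewrite real_ler_norm ?num_real.
exists e => // l l_ge0 l_le; rewrite /= linearD linearZ /= -/d.
have ld_le : l * d <= e * `|d|.
  apply: (le_trans (y := l * `|d|)); first by rewrite ler_wpM2l.
  by rewrite ler_wpM2r.
lra.
Qed.

Lemma convex_halfspace : cconvex [set x | f x < c].
Proof.
apply/convex_setW => x y; rewrite !inE /= => fx_lt fy_lt t t_gt0 t_lt1.
rewrite inE /= linearD !linearZ /= /unstable.onem.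
have tfx_lt : t%:inum * f x < t%:inum * c by rewrite ltr_pM2l.
have tfy_lt : (1 - t%:inum) * f y < (1 - t%:inum) * c by rewrite ltr_pM2l ?subr_gt0.
lra.
Qed.

Lemma core_open_halfspace : core_open [set x | f x < c].
Proof.
exists [set [set x | f x < c]]; rewrite bigcup_set1; split=> // B ->.
by split; [exact: convex_halfspace | exact: cor_halfspace].
Qed.

End core_open_halfspace.

Theorem lemma3p14 (R : realType) (X : lmodType R) (I : eqType) (b : I -> X) :
  hamel_basis b -> ~ cl_c (range b) 0.
Proof.
move=> b_basis; have [f fb1] := hamel_linear_extension (fun=> 1 : R^o) b_basis.
pose H := [set x | (f : {scalar X}) x < 1].
have H_closedC : core_closed (~` H).
  by rewrite /core_closed setCK; exact: core_open_halfspace.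
have range_notin_H : range b `<=` ~` H by move=> _ [i _ <-]; rewrite /H /= fb1 ltxx.
by move=> /(_ _ H_closedC range_notin_H); rewrite /H /= raddf0 ltr01.
Qed.
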